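(* With the notation of the context, let $\alpha^*=\inf_{x\in\Delta}G(x)$. Then there exists $x^*\in\Delta$ with $G(x^* )=\alpha^*$.
   Context: Fix an integer $n\ge2$ and free generators $\xi_1,\dots,\xi_n$ of a free group; throughout $i,j,k\in\{1,\dots,n\}$ and $t,s,p\in\{-1,+1\}$. Let $\Psi$ be the set of reduced words $\xi_i^{2t}$; $\xi_i^t\xi_j^{2s}$ ($i\ne j$); $\xi_i^t\xi_j^s\xi_k^p$ ($i\ne j$, $j\ne k$). Types: type 1 $=\xi_i^{2t}$; type 2 $=\xi_i^t\xi_j^{2s}$; type 3 $=\xi_i^t\xi_j^s\xi_i^t$; type 4 $=\xi_i^t\xi_j^s\xi_i^{-t}$; type 5 $=\xi_i^t\xi_j^s\xi_k^p$ with $i,j,k$ pairwise distinct. For a letter $\xi_a^x$ let $S(\xi_a^x)\subset\Psi$ be the set of words in $\Psi$ beginning with $\xi_a^x$, namely $\{\xi_a^{2x}\}\cup\{\xi_a^x\xi_j^{2s}\}\cup\{\xi_a^x\xi_j^s\xi_k^p\}$; for $a\ne b$ let $S(\xi_a^x\xi_b^y)=\{\xi_a^x\xi_b^{2y}\}\cup\{\xi_a^x\xi_b^y\xi_k^p: k\ne b\}$. A relation $r$ is a pair $(\psi_r,\Psi_r)$ with $\psi_r\in\Psi$, $\Psi_r\subseteq\Psi$; the relations considered are (indices $i_0\ne j_0$, and in type 5 $i_0,j_0,k_0$ pairwise distinct, all signs arbitrary): 1a: $\psi_r=\xi_{i_0}^{2t_0}$, $\Psi_r=\Psi\setminus S(\xi_{i_0}^{t_0})$;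 1b: $\psi_r=\xi_{i_0}^{2t_0}$, $\Psi_r=\Psi\setminus\{\xi_{i_0}^{t_0}\xi_{j_0}^{s_0}\xi_{i_0}^{t_0}\}$; 2a: $\psi_r=\xi_{i_0}^{t_0}\xi_{j_0}^{2s_0}$, $\Psi_r=\Psi\setminus\{\xi_{j_0}^{2s_0}\}$; 2b: $\psi_r=\xi_{i_0}^{t_0}\xi_{j_0}^{2s_0}$, $\Psi_r=\Psi\setminus S(\xi_{i_0}^{t_0}\xi_{j_0}^{s_0})$; 3a: $\psi_r=\xi_{i_0}^{t_0}\xi_{j_0}^{s_0}\xi_{i_0}^{t_0}$, $\Psi_r=\Psi\setminus S(\xi_{j_0}^{s_0}\xi_{i_0}^{t_0})$; 3b: $\psi_r=\xi_{i_0}^{t_0}\xi_{j_0}^{s_0}\xi_{i_0}^{t_0}$, $\Psi_r=\Psi\setminus\{\xi_{i_0}^{2t_0}\}$; 4a: $\psi_r=\xi_{i_0}^{t_0}\xi_{j_0}^{s_0}\xi_{i_0}^{-t_0}$, $\Psi_r=\Psi\setminus S(\xi_{j_0}^{s_0}\xi_{i_0}^{-t_0})$; 4b: $\psi_r=\xi_{i_0}^{t_0}\xi_{j_0}^{s_0}\xi_{i_0}^{-t_0}$, $\Psi_r=S(\xi_{i_0}^{t_0})$; 5a: $\psi_r=\xi_{i_0}^{t_0}\xi_{j_0}^{s_0}\xi_{k_0}^{p_0}$, $\Psi_r=\Psi\setminus S(\xi_{j_0}^{s_0}\xi_{k_0}^{p_0})$; 5b: $\psi_r=\xi_{i_0}^{t_0}\xi_{j_0}^{s_0}\xi_{k_0}^{p_0}$,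 $\Psi_r=\Psi\setminus S(\xi_{i_0}^{t_0}\xi_{k_0}^{p_0})$. Let $\mathcal{G}$ be the collection of all these relations and $\mathcal{F}\subset\mathcal{G}$ the relations of types 1a, 2b, 3a, 4b, 5a. Let $\Delta=\{x\in\mathbb{R}^\Psi: x(\psi)>0\ \forall\psi,\ \sum_{\psi\in\Psi}x(\psi)=1\}$. For a relation $r$ and $x\in\Delta$, put $x_r=x(\psi_r)$, $X_r=\sum_{\psi\in\Psi_r}x(\psi)$ and $f_r(x)=\frac{1-x_r}{x_r}\cdot\frac{1-X_r}{X_r}$. Define $F(x)=\max_{r\in\mathcal{F}}f_r(x)$ and $G(x)=\max_{r\in\mathcal{G}}f_r(x)$ on $\Delta$. *)

From HB Require Import structures.
From mathcomp Require Import all_boot all_order all_algebra.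
From mathcomp Require Import boolp classical_sets reals.
Set Implicit Arguments. Unset Strict Implicit. Unset Printing Implicit Defensive.
Import Order.TTheory GRing.Theory Num.Theory.
Local Open Scope ring_scope.

Section Words.
Variable n : nat.

(* A letter xi_i^t : index i, sign t (true = +1, false = -1). *)
Definition letter := ('I_n * bool)%type.
Definition idx (l : letter) : 'I_n := l.1.
Definition linv (l : letter) : letter := (l.1, ~~ l.2).

(* Raw words of length 2 or 3 as letter sequences:
   (a, b, None) = a b ;  (a, b, Some c) = a b c. *)
Definition word := (letter * letter * option letter)%type.

(* Membership in Psi:
   xi_i^{2t}             = (a, a, None)
   xi_i^t xi_j^{2s}      = (a, b, Some b)   with i <> j
   xi_i^t xi_j^s xi_k^p  = (a, b, Some c)   with i <> j, j <> k. *)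
Definition inPsi (w : word) : bool :=
  match w with
  | (a, b, None) => a == b
  | (a, b, Some c) => (idx a != idx b) && ((c == b) || (idx c != idx b))
  end.

Definition Psi := {w : word | inPsi w}.

Definition S1 (l : letter) (w : word) : bool := w.1.1 == l.

(* S(xi_a^x xi_b^y) = {xi_a^x xi_b^{2y}} u {xi_a^x xi_b^y xi_k^p : k <> b} *)
Definition S2 (l1 l2 : letter) (w : word) : bool :=
  match w with
  | (a, b, Some c) => (a == l1) && (b == l2) && ((c == l2) || (idx c != idx l2))
  | _ => false
  end.

(* A relation r = (psi_r, Psi_r). *)
Definition relation := (Psi * {set Psi})%type.

Definition compl (P : word -> bool) : {set Psi} := [set w : Psi | ~~ P (val w)].
Definition minus1 (v : word) : {set Psi} := [set w : Psi | val w != v].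

Definition is1a (r : relation) : bool :=
  [exists i0 : 'I_n, exists t0 : bool,
    let a := (i0, t0) in (val r.1 == (a, a, None)) && (r.2 == compl (S1 a))].
Definition is1b (r : relation) : bool :=
  [exists i0 : 'I_n, exists j0 : 'I_n, exists t0 : bool, exists s0 : bool,
    let a := (i0, t0) in let b := (j0, s0) in
    [&& i0 != j0, val r.1 == (a, a, None) & r.2 == minus1 (a, b, Some a)]].
Definition is2a (r : relation) : bool :=
  [exists i0 : 'I_n, exists j0 : 'I_n, exists t0 : bool, exists s0 : bool,
    let a := (i0, t0) in let b := (j0, s0) in
    [&& i0 != j0, val r.1 == (a, b, Some b) & r.2 == minus1 (b, b, None)]].
Definition is2b (r : relation) : bool :=
  [exists i0 : 'I_n, exists j0 : 'I_n, exists t0 : bool, exists s0 : bool,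
    let a := (i0, t0) in let b := (j0, s0) in
    [&& i0 != j0, val r.1 == (a, b, Some b) & r.2 == compl (S2 a b)]].
Definition is3a (r : relation) : bool :=
  [exists i0 : 'I_n, exists j0 : 'I_n, exists t0 : bool, exists s0 : bool,
    let a := (i0, t0) in let b := (j0, s0) in
    [&& i0 != j0, val r.1 == (a, b, Some a) & r.2 == compl (S2 b a)]].
Definition is3b (r : relation) : bool :=
  [exists i0 : 'I_n, exists j0 : 'I_n, exists t0 : bool, exists s0 : bool,
    let a := (i0, t0) in let b := (j0, s0) in
    [&& i0 != j0, val r.1 == (a, b, Some a) & r.2 == minus1 (a, a, None)]].
Definition is4a (r : relation) : bool :=
  [exists i0 : 'I_n, exists j0 : 'I_n, exists t0 : bool, exists s0 : bool,
    let a := (i0, t0) in let b := (j0, s0) in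
    [&& i0 != j0, val r.1 == (a, b, Some (linv a)) & r.2 == compl (S2 b (linv a))]].
Definition is4b (r : relation) : bool :=
  [exists i0 : 'I_n, exists j0 : 'I_n, exists t0 : bool, exists s0 : bool,
    let a := (i0, t0) in let b := (j0, s0) in
    [&& i0 != j0, val r.1 == (a, b, Some (linv a)) & r.2 == [set w : Psi | S1 a (val w)]%SET]].
Definition is5a (r : relation) : bool :=
  [exists i0 : 'I_n, exists j0 : 'I_n, exists k0 : 'I_n,
   exists t0 : bool, exists s0 : bool, exists p0 : bool,
    let a := (i0, t0) in let b := (j0, s0) in let c := (k0, p0) in
    [&& i0 != j0, j0 != k0, i0 != k0,
        val r.1 == (a, b, Some c) & r.2 == compl (S2 b c)]].
Definition is5b (r : relation) : bool :=
  [exists i0 : 'I_n, exists j0 : 'I_n, exists k0 : 'I_n,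
   exists t0 : bool, exists s0 : bool, exists p0 : bool,
    let a := (i0, t0) in let b := (j0, s0) in let c := (k0, p0) in
    [&& i0 != j0, j0 != k0, i0 != k0,
        val r.1 == (a, b, Some c) & r.2 == compl (S2 a c)]].

Definition inG (r : relation) : bool :=
  [|| is1a r, is1b r, is2a r, is2b r, is3a r, is3b r, is4a r, is4b r, is5a r | is5b r].
Definition inF (r : relation) : bool :=
  [|| is1a r, is2b r, is3a r, is4b r | is5a r].

Variable R : realType.

Local Open Scope classical_set_scope.
Definition Delta : set (Psi -> R) :=
  [set x | (forall w, 0 < x w) /\ \sum_(w : Psi) x w = 1].

Definition xr (r : relation) (x : Psi -> R) : R := x r.1.
Definition Xr (r : relation) (x : Psi -> R) : R := \sum_(w in r.2) x w.
Definition fr (r : relation) (x : Psi -> R) : R :=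
  (1 - xr r x) / xr r x * ((1 - Xr r x) / Xr r x).

(* Maximum over a finite nonempty collection; the default 0 is harmless
   since every f_r is >= 0 on Delta. *)
Definition Ffun (x : Psi -> R) : R := \big[Num.max/0]_(r : relation | inF r) fr r x.
Definition Gfun (x : Psi -> R) : R := \big[Num.max/0]_(r : relation | inG r) fr r x.

End Words.

(* If G(x) <= M on the simplex, every coordinate of x is bounded below by a
   positive constant depending only on M. Indeed, for a relation r with a word
   u outside Psi_r we have 1 - X_r >= x(u), so f_r(x) <= M and x(u) >= c force
   x(psi_r) >= c / (M + c). Some coordinate is at least 1/|Psi|, and relations of
   types 1a, 2a, 3b, 4b and 5a lead from any word to any other in at most six
   such steps. Hence the sublevel set {G <= M} lies in a compact part K of the
   open simplex on which G is continuous, and for M >= G(x0) with x0 in K the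
   minimum of G over K is its infimum over the whole simplex. *)

From HB Require Import structures.
From mathcomp Require Import all_boot all_order all_algebra.
From mathcomp Require Import boolp classical_sets reals.
From mathcomp Require Import topology normedtype derive.
From mathcomp Require Import ring lra.
Set Implicit Arguments. Unset Strict Implicit. Unset Printing Implicit Defensive.
Import Order.TTheory GRing.Theory Num.Theory numFieldNormedType.Exports.
Local Open Scope ring_scope.
Local Open Scope classical_set_scope.

Section FloorStep.
Variable R : realFieldType.
Implicit Types M c : R.

Definition floor_step M c := c / (M + c).

Lemma floor_step_gt0 M c : 0 <= M -> 0 < c -> 0 < floor_step M c.
Proof. by move=> M0 c0; rewrite divr_gt0 // ltr_wpDl. Qed.

Lemma floor_step_le M c : 1 <= M -> 0 < c -> floor_step M c <= c.
Proof. by move=> M1 c0; rewrite ler_pdivrMr; [nra | lra]. Qed.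

Lemma iter_floor_step_gt0 M c k : 0 <= M -> 0 < c -> 0 < iter k (floor_step M) c.
Proof. by move=> M0 c0; elim: k => //= k IH; apply: floor_step_gt0. Qed.

Lemma floor_step_le_of_odds M c p X :
  0 <= M -> 0 < c -> 0 < p -> p <= 1 -> 0 < X -> c <= 1 - X ->
  (1 - p) / p * ((1 - X) / X) <= M -> floor_step M c <= p.
Proof.
move=> M0 c0 p0 p1 X0 cX fM.
have odds : (1 - p) * (1 - X) <= M * p * X.
  have -> : (1 - p) * (1 - X) = (1 - p) / p * ((1 - X) / X) * (p * X).
    by field; rewrite !gt_eqF.
  by rewrite -[M * p * X]mulrA ler_wpM2r // mulr_ge0 // ltW.
rewrite ler_pdivrMr; last lra.
(* c (1 - p) <= (1 - X) (1 - p) <= M p X <= M p *)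
have : c * (1 - p) <= (1 - X) * (1 - p) by rewrite ler_wpM2r //; lra.
have : 0 <= M * p * (1 - X) by rewrite !mulr_ge0 ?(ltW p0) //; lra.
nra.
Qed.
End FloorStep.

Section Reach.
Variable n : nat.
Hypothesis hn : (2 <= n)%N.
Implicit Types (a b d : letter n) (u v w : Psi n).

Lemma exists_other_index (i : 'I_n) : exists j : 'I_n, i != j.
Proof.
have [->|ne] := eqVneq i (Ordinal (ltnW hn)); last by exists (Ordinal (ltnW hn)).
by exists (Ordinal hn); apply/eqP => /(congr1 val).
Qed.

Lemma linv_neq a : linv a != a.
Proof. by case: a => i [] /=; rewrite /linv xpair_eqE eqxx. Qed.

Lemma letter_idx_eq a d : idx d = idx a -> d = a \/ d = linv a.
Proof. by case: a d => i t [k p] /= ->; case: t; case: p; [left|right|right|left]. Qed.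

Definition square a : Psi n := exist _ (a, a, None) (eqxx a).

Definition edge u v : Prop :=
  exists2 r : relation n, inG r & [/\ r.1 = v, (0 < #|r.2|)%N & u \notin r.2].

Fixpoint reach (k : nat) u v : Prop :=
  if k is k'.+1 then reach k' u v \/ exists2 w, reach k' u w & edge w v
  else u = v.

Lemma reach_trans k l u w v : reach k u w -> reach l w v -> reach (l + k) u v.
Proof.
move=> uw; elim: l v => [v /= <- //|l IH v [wv|[w' ww' w'v]]]; first by left; exact: IH.
by right; exists w' => //; exact: IH.
Qed.

Lemma edge_reach u v : edge u v -> reach 1 u v.
Proof. by right; exists u. Qed.

Ltac exists4 i j t s :=
  apply/existsP; exists i; apply/existsP; exists j;
  apply/existsP; exists t; apply/existsP; exists s.

Lemma edge_1a a u v : (val u).1.1 = a -> val v = (a, a, None) -> edge u v.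
Proof.
case: a => i t hu hv; exists (v, compl (S1 (i, t))).
  have r1a : is1a (v, compl (S1 (i, t))).
    by apply/existsP; exists i; apply/existsP; exists t; rewrite /= hv !eqxx.
  by apply/orP; left.
split=> //; last by rewrite inE /S1 hu eqxx.
by apply/card_gt0P; exists (square (linv (i, t))); rewrite inE /S1 linv_neq.
Qed.

Lemma edge_2a a b u v :
  idx a != idx b -> val v = (a, b, Some b) -> val u = (b, b, None) -> edge u v.
Proof.
case: a b => i t [j s] ab hv hu; exists (v, minus1 ((j, s), (j, s), None)).
  have r2a : is2a (v, minus1 ((j, s), (j, s), None)) by exists4 i j t s; rewrite /= ab hv !eqxx.
  (* [rewrite r2a orbT] would make unification unfold the other disjuncts. *)
  by rewrite /inG; do 2 apply/orP/or_intror; apply/orP; left.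
split=> //; last by rewrite inE hu eqxx.
by apply/card_gt0P; exists (square (i, t)); rewrite inE /=; apply: contra ab => /eqP [->].
Qed.

Lemma edge_3b a b u v :
  idx a != idx b -> val v = (a, b, Some a) -> val u = (a, a, None) -> edge u v.
Proof.
case: a b => i t [j s] ab hv hu; exists (v, minus1 ((i, t), (i, t), None)).
  have r3b : is3b (v, minus1 ((i, t), (i, t), None)) by exists4 i j t s; rewrite /= ab hv !eqxx.
  by rewrite /inG; do 5 apply/orP/or_intror; apply/orP; left.
split=> //; last by rewrite inE hu eqxx.
by apply/card_gt0P; exists (square (j, s)); rewrite inE /=; apply: contra ab => /eqP [->].
Qed.

Lemma edge_4b a b u v :
  idx a != idx b -> val v = (a, b, Some (linv a)) -> (val u).1.1 != a -> edge u v.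
Proof.
case: a b => i t [j s] ab hv hu; exists (v, [set w : Psi n | S1 (i, t) (val w)]%SET).
  have r4b : is4b (v, [set w : Psi n | S1 (i, t) (val w)]%SET).
    by exists4 i j t s; rewrite /= ab hv !eqxx.
  by rewrite /inG; do 7 apply/orP/or_intror; apply/orP; left.
split=> //; last by rewrite inE /S1.
by apply/card_gt0P; exists (square (i, t)); rewrite inE /S1.
Qed.

Lemma edge_5a a b d u v :
  idx a != idx b -> idx b != idx d -> idx a != idx d ->
  val v = (a, b, Some d) -> val u = (b, d, Some d) -> edge u v.
Proof.
case: a b d => i t [j s] [k p] ab bd ad hv hu.
exists (v, compl (S2 (j, s) (k, p))).
  have r5a : is5a (v, compl (S2 (j, s) (k, p))).
    apply/existsP; exists i; apply/existsP; exists j; apply/existsP; exists k.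
    apply/existsP; exists t; apply/existsP; exists s; apply/existsP; exists p.
    by rewrite /= ab bd ad hv !eqxx.
  by rewrite /inG; do 8 apply/orP/or_intror; apply/orP; left.
split=> //; last by rewrite inE /S2 hu !eqxx.
by apply/card_gt0P; exists (square (i, t)); rewrite inE /S2.
Qed.

Lemma reach_square_other u a : (val u).1.1 != a -> reach 2 u (square a).
Proof.
move=> ua; have [j aj] := exists_other_index (idx a).
have v_in : inPsi (a, (j, true), Some (linv a)) by rewrite /= aj orbT.
pose v : Psi n := exist _ (a, (j, true), Some (linv a)) v_in.
have uv : edge u v by apply: (edge_4b (b := (j, true)) aj).
have va : edge v (square a) by apply: edge_1a.
exact: reach_trans (edge_reach uv) (edge_reach va).
Qed.

Lemma reach_square u a : reach 4 u (square a).
Proof.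
have [ua|] := eqVneq (val u).1.1 a; last by left; left; apply: reach_square_other.
have ua' : (val u).1.1 != linv a by rewrite ua eq_sym linv_neq.
exact: reach_trans (reach_square_other ua')
  (reach_square_other (u := square (linv a)) (linv_neq a)).
Qed.

Lemma reach_from_square v : exists a, reach 2 (square a) v.
Proof.
case E: (val v) (valP v) => [[a b] [d|]] /= hv; last first.
  by exists a; left; left; apply: val_inj; rewrite E (eqP hv).
case/andP: hv => ab hd.
have [db | db] := eqVneq d b.
  by rewrite db in E; exists b; left; apply/edge_reach/(edge_2a ab E).
have bd : idx b != idx d by rewrite eq_sym; rewrite (negbTE db) in hd.
have [/letter_idx_eq [da|da] | ad] := eqVneq (idx d) (idx a).
- by exists a; left; apply/edge_reach/(edge_3b ab) => //; rewrite E da.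
- by exists (linv a); left; apply/edge_reach/(edge_4b ab) => /=; rewrite ?E ?da ?linv_neq.
- have u_in : inPsi (b, d, Some d) by rewrite /= bd eqxx.
  pose u : Psi n := exist _ (b, d, Some d) u_in.
  have du : edge (square d) u by apply: (edge_2a bd).
  have uv : edge u v by apply: (edge_5a ab bd _ E) => //; rewrite eq_sym.
  by exists d; apply: reach_trans (edge_reach du) (edge_reach uv).
Qed.

Lemma reach_all u v : reach 6 u v.
Proof.
have [a av] := reach_from_square v.
exact: reach_trans (reach_square u a) av.
Qed.
End Reach.

Lemma sum_in_addr_le (R : numDomainType) (T : finType) (F : T -> R) (A : {set T}) t :
  (forall s, 0 <= F s) -> t \notin A -> \sum_(s in A) F s + F t <= \sum_s F s.
Proof.
move=> F0 tA; rewrite [leRHS](bigID (mem A)) /= lerD2l (bigD1 t) //= lerDl.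
by rewrite sumr_ge0.
Qed.

Lemma exists_ge_mean (R : realFieldType) (T : finType) (F : T -> R) :
  (0 < #|T|)%N -> exists t, (\sum_s F s) / #|T|%:R <= F t.
Proof.
move=> T0; apply: contrapT => /forallNP F_lt.
have : \sum_s F s < \sum_(s : T) (\sum_s F s) / #|T|%:R.
  apply: ltr_sum; first by case/card_gt0P: T0 => t _; apply/hasP; exists t.
  by move=> s _; rewrite ltNge; apply/negP/F_lt.
by rewrite sumr_const -(mulr_natr ((\sum_s F s) / #|T|%:R)) divfK ?ltxx // pnatr_eq0 -lt0n.
Qed.

Section SublevelBound.
Variables (n : nat) (R : realType).
Implicit Types (x : Psi n -> R) (r : relation n) (u v : Psi n) (M c : R).

Lemma Delta_le1 x u : Delta x -> x u <= 1.
Proof.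
case=> x_gt0 <-; rewrite (bigD1 u) //= lerDl.
by rewrite sumr_ge0 // => w _; apply: ltW.
Qed.

Lemma Xr_gt0 r x : (forall w, 0 < x w) -> (0 < #|r.2|)%N -> 0 < Xr r x.
Proof.
move=> x_gt0 /card_gt0P [w wr]; rewrite /Xr (bigD1 w) //= ltr_pwDl //.
by rewrite sumr_ge0 // => w' _; apply: ltW.
Qed.

Lemma Xr_addr_le1 r x u : Delta x -> u \notin r.2 -> Xr r x + x u <= 1.
Proof. by case=> x_gt0 <- ur; apply: sum_in_addr_le => // w; apply: ltW. Qed.

Lemma fr_le_Gfun r x : inG r -> fr r x <= Gfun x.
Proof. exact: le_bigmax_cond. Qed.

Lemma edge_lower_bound x M c u v : Delta x -> Gfun x <= M -> 0 <= M ->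
  edge u v -> 0 < c -> c <= x u -> floor_step M c <= x v.
Proof.
move=> Dx xM M0 [r rG [<- r2 ur]] c0 cu.
apply: (floor_step_le_of_odds M0 c0 (Dx.1 _) (Delta_le1 _ Dx) (Xr_gt0 Dx.1 r2)).
  by have := Xr_addr_le1 Dx ur; lra.
exact: le_trans (fr_le_Gfun x rG) xM.
Qed.

Lemma reach_lower_bound x M c u v k : Delta x -> Gfun x <= M -> 1 <= M ->
  0 < c -> c <= x u -> reach k u v -> iter k (floor_step M) c <= x v.
Proof.
move=> Dx xM M1 c0 cu; have M0 : 0 <= M by lra.
elim: k v => [v /= <- //|k IH v [uv|[w uw wv]]] /=.
  exact: le_trans (floor_step_le M1 (iter_floor_step_gt0 k M0 c0)) (IH v uv).
exact: edge_lower_bound wv (iter_floor_step_gt0 k M0 c0) (IH w uw).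
Qed.

Hypothesis hn : (2 <= n)%N.

Lemma card_Psi_gt0 : (0 < #|{: Psi n}|)%N.
Proof. by apply/card_gt0P; exists (square (Ordinal hn, true)). Qed.

Lemma Delta_uniform : Delta (fun _ : Psi n => #|{: Psi n}|%:R^-1 : R).
Proof.
split=> [w|]; first by rewrite invr_gt0 ltr0n card_Psi_gt0.
by rewrite sumr_const -(mulr_natr #|{: Psi n}|%:R^-1) mulVf // pnatr_eq0 -lt0n card_Psi_gt0.
Qed.

Definition sublevel_floor M : R := iter 6 (floor_step M) #|{: Psi n}|%:R^-1.

Lemma sublevel_floor_gt0 M : 0 <= M -> 0 < sublevel_floor M.
Proof. by move=> M0; rewrite iter_floor_step_gt0 // invr_gt0 ltr0n card_Psi_gt0. Qed.

Lemma Delta_sublevel_ge x M : Delta x -> Gfun x <= M -> 1 <= M ->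
  forall v, sublevel_floor M <= x v.
Proof.
move=> Dx xM M1 v; have [u] := exists_ge_mean x card_Psi_gt0.
rewrite Dx.2 div1r => xu.
apply: reach_lower_bound Dx xM M1 _ xu (reach_all hn u v).
by rewrite invr_gt0 ltr0n card_Psi_gt0.
Qed.
End SublevelBound.

(* Without this instance, typeclass search for the neighbourhood filter of the
   product topology diverges. *)
#[local] Instance nbhs_filter_prod (T : Type) (R : realType)
  (x : prod_topology (fun _ : T => R : topologicalType)) : Filter (nbhs x) | 0 :=
  nbhs_filter x.

Section Simplex.
Variables (T : finType) (R : realType).
Local Notation PR := (prod_topology (fun _ : T => R : topologicalType)).

Lemma continuous_coord (w : T) : continuous (fun y : PR => y w).
Proof. exact: proj_continuous. Qed.

Lemma continuous_sum_coord (P : pred T) :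
  continuous (fun y : PR => \sum_(w | P w) y w).
Proof.
apply: continuous_big => [|w _]; first exact: add_continuous.
exact: continuous_coord.
Qed.

Lemma compact_simplex_slab (d : R) :
  compact ([set y : PR | forall w, `[d, 1] (y w)] `&` [set y | \sum_w y w = 1]).
Proof.
apply: compact_closedI.
  by have := @tychonoff T (fun=> R : topologicalType) _ (fun=> @segment_compact R d 1).
apply: (@preimage_closed _ R (fun y : PR => \sum_w y w) [set x | x = 1]).
  by move=> y _; apply: continuous_sum_coord.
exact: closed_eq.
Qed.
End Simplex.

Section Continuity.
Variables (n : nat) (R : realType).
Local Notation PR := (prod_topology (fun _ : Psi n => R : topologicalType)).

Lemma continuous_fr (r : relation n) (x : PR) : (forall w, 0 < x w) ->
  {for x, continuous (fun y : PR => fr r y)}.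
Proof.
move=> x_gt0; case: (set_0Vmem r.2) => [r0 | [w wr]].
  (* X_r = 0, and f_r = 0 because 0^-1 = 0. *)
  have -> : (fun y : PR => fr r y) = fun=> 0.
    by apply: funext => y; rewrite /fr /Xr r0 big_set0 invr0 !mulr0.
  exact: cst_continuous.
have Xr0 : 0 < Xr r x by apply: Xr_gt0 => //; apply/card_gt0P; exists w.
have cXr : continuous (fun y : PR => Xr r y) by exact: continuous_sum_coord.
apply: cvgM; apply: cvgM.
- by apply: cvgB; [exact: cvg_cst | exact: continuous_coord].
- by apply: cvgV; [exact/lt0r_neq0/x_gt0 | exact: continuous_coord].
- by apply: cvgB; [exact: cvg_cst | exact: cXr].
- by apply: cvgV; [exact: lt0r_neq0 | exact: cXr].
Qed.

Lemma continuous_Gfun (x : PR) : (forall w, 0 < x w) ->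
  {for x, continuous (fun y : PR => Gfun y)}.
Proof.
move=> x_gt0; apply: cvg_big => [|r _]; first exact: max_continuous.
exact: continuous_fr.
Qed.
End Continuity.

Lemma min_eq_inf (T : Type) (R : realType) (A : set T) (f : T -> R) c :
  A c -> (forall y, A y -> f c <= f y) -> f c = inf (f @` A).
Proof.
move=> Ac cmin; apply/eqP; rewrite eq_le; apply/andP; split.
  apply: lb_le_inf; first by exists (f c), c.
  by move=> _ [y Ay <-]; exact: cmin.
apply: ge_inf; last by exists c.
by exists (f c) => _ [y Ay <-]; exact: cmin.
Qed.

Theorem lemma5p1 (R : realType) (n : nat) (hn : (2 <= n)%N) :
  exists2 xs : Psi n -> R, @Delta n R xs &
    Gfun xs = inf [set Gfun y | y in @Delta n R].
Proof.
pose x0 : Psi n -> R := fun _ => #|{: Psi n}|%:R^-1.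
have Dx0 : Delta x0 := Delta_uniform R hn.
pose M := Num.max (Gfun x0) 1.
have M1 : 1 <= M by rewrite le_max lexx orbT.
have M0 : 0 <= M := le_trans ler01 M1.
have x0M : Gfun x0 <= M by rewrite le_max lexx.
pose K := [set y : prod_topology (fun _ : Psi n => R : topologicalType) |
  forall w, `[sublevel_floor n M, 1] (y w)] `&` [set y | \sum_w y w = 1].
have sublevel_K y : Delta y -> Gfun y <= M -> K y.
  move=> Dy yM; split=> [w|]; last exact: Dy.2.
  by rewrite /= in_itv /= Delta_sublevel_ge // Delta_le1.
have K_Delta y : K y -> Delta y.
  case=> Ky Sy; split=> // w; apply: lt_le_trans (sublevel_floor_gt0 hn M0) _.
  by case/andP: (Ky w).
have [c /set_mem Kc c_min] : exists2 c, c \in K & forall y, y \in K -> Gfun c <= Gfun y.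
  apply: compact_EVT_min; [by exists x0; apply: sublevel_K | exact: compact_simplex_slab |].
  apply: continuous_in_subspaceT => y /set_mem /K_Delta [y_gt0 _].
  exact: continuous_Gfun.
exists c; first exact: K_Delta.
apply: min_eq_inf => [|y Dy]; first exact: K_Delta.
have [yM|/ltW My] := leP (Gfun y) M; first exact/c_min/mem_set/sublevel_K.
exact: le_trans (c_min _ (mem_set (sublevel_K _ Dx0 x0M))) (le_trans x0M My).
Qed.
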